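(* For every integer $d\ge1$, the set of forms $f\in\Sigma^4_{2,4d}$ of $4$-length at most $4$ (i.e. $f=\sum_{i=1}^4 p_i^4$ with $p_i\in\mathbb{R}[x,y]_d$) is a full-dimensional semi-algebraic subset of $\mathbb{R}[x,y]_{4d}$, i.e. it has nonempty interior in $\mathbb{R}[x,y]_{4d}$.
   Context: $\mathbb{R}[x,y]_e$ denotes the space of real binary forms of degree $e$. $\Sigma^4_{2,4d}\subset\mathbb{R}[x,y]_{4d}$ is the cone of finite sums of fourth powers of forms in $\mathbb{R}[x,y]_d$; the $4$-length of $f\in\Sigma^4_{2,4d}$ is the minimal number of such summands. *)

From HB Require Import structures.
From mathcomp Require Import all_boot all_order all_algebra.
From mathcomp Require Import all_classical all_reals all_analysis.
Import numFieldNormedType.Exports.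
Set Implicit Arguments. Unset Strict Implicit. Unset Printing Implicit Defensive.
Import Order.TTheory GRing.Theory Num.Theory.
Local Open Scope ring_scope.
Local Open Scope classical_set_scope.

(* A real binary form of degree e, f = \sum_{k=0}^e c_k x^k y^(e-k), is
   represented by its coefficient vector c : 'rV[R]_(e.+1) (c 0 k = c_k).
   The space R[x,y]_e is thus identified with 'rV[R]_(e.+1), carrying its
   canonical (normed, finite-dimensional) topology. *)
Definition bform_eval (R : comNzRingType) (e : nat) (c : 'rV[R]_(e.+1)) (x y : R) : R :=
  \sum_(k < e.+1) c 0 k * x ^+ k * y ^+ (e - k).

(* Forms f in R[x,y]_{4d} of 4-length at most 4:
   f = p_1^4 + p_2^4 + p_3^4 + p_4^4 with p_i in R[x,y]_d
   (equality as polynomials, equivalently as functions on R^2 since R is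
   infinite). *)
Arguments bform_eval : clear implicits.
Definition len4_le4 (R : realType) (d : nat) : set 'rV[R]_((4 * d).+1) :=
  [set f | exists p : 'I_4 -> 'rV[R]_(d.+1),
     forall x y : R, bform_eval R (4 * d) f x y = \sum_(i < 4) (bform_eval R d (p i) x y) ^+ 4].
Arguments len4_le4 : clear implicits.

(* Identify a form of degree e with the polynomial of its coefficients
   (x^k y^(e-k) becoming X^k) and let Y = X^d, i.e. the form x^d. At
   (1, Y, 1 + Y, 1 - Y) the differential of (p_i) |-> \sum_i p_i^4 is
   (h_i) |-> 4 (h_1 + Y^3 h_2 + (1 + Y)^3 h_3 + (1 - Y)^3 h_4); writing
   h_3 = h + k and h_4 = h - k it becomes
   4 h_1 + 8 h + 24 Y k + 24 Y^2 h + Y^3 (4 h_2 + 8 k),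
   so cutting a form of degree 4d into its four blocks of coefficients of
   1, Y, Y^2, Y^3 yields an explicit right inverse [corr]. Composed with it,
   the sum of fourth powers is f0 + id + G, where G gathers the terms of
   degree at least 2 and is therefore a contraction on a small ball for the
   l^1 norm of coefficients. Banach's fixed point theorem then puts a whole
   ball around f0 = 1 + Y^4 + (1 + Y)^4 + (1 - Y)^4 in the image. *)
From HB Require Import structures.
From mathcomp Require Import all_boot all_order all_algebra.
From mathcomp Require Import all_classical all_reals all_analysis.
From mathcomp Require Import ring lra zify.
Import numFieldNormedType.Exports.
Import Order.TTheory GRing.Theory Num.Theory.
Local Open Scope ring_scope.
Local Open Scope classical_set_scope.
Set Implicit Arguments. Unset Strict Implicit. Unset Printing Implicit Defensive.

Section L1Norm.
Variable R : numDomainType.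
Implicit Types p q : {poly R}.

Definition l1norm p := \sum_(i < size p) `|p`_i|.

Lemma l1norm_widen p m : (size p <= m)%N -> l1norm p = \sum_(i < m) `|p`_i|.
Proof.
move=> hm; rewrite /l1norm -(subnKC hm) big_split_ord /=.
rewrite [X in _ + X]big1 ?addr0 // => i _.
by rewrite nth_default ?normr0 // leq_addr.
Qed.

Lemma l1norm_ge0 p : 0 <= l1norm p.
Proof. exact: sumr_ge0. Qed.

Lemma l1norm0 : l1norm 0 = 0.
Proof. by rewrite /l1norm size_poly0 big_ord0. Qed.

Lemma ler_coef_l1norm p i : `|p`_i| <= l1norm p.
Proof.
have [hi|hi] := ltnP i (size p); last by rewrite nth_default // normr0 l1norm_ge0.
by rewrite /l1norm (bigD1 (Ordinal hi)) //= lerDl sumr_ge0.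
Qed.

Lemma ler_l1norm_coef p q : (forall i, `|p`_i| <= `|q`_i|) -> l1norm p <= l1norm q.
Proof.
move=> hpq; set m := maxn (size p) (size q).
rewrite (@l1norm_widen p m) ?leq_maxl // (@l1norm_widen q m) ?leq_maxr //.
by apply: ler_sum => i _.
Qed.

Lemma ler_l1normD p q : l1norm (p + q) <= l1norm p + l1norm q.
Proof.
set m := maxn (size p) (size q).
rewrite (@l1norm_widen (p + q) m); last by rewrite (leq_trans (size_polyD _ _)).
rewrite (@l1norm_widen p m) ?leq_maxl // (@l1norm_widen q m) ?leq_maxr //.
by rewrite -big_split /=; apply: ler_sum => i _; rewrite coefD ler_normD.
Qed.

Lemma l1normN p : l1norm (- p) = l1norm p.
Proof. by rewrite /l1norm size_polyN; apply: eq_bigr => i _; rewrite coefN normrN. Qed.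

Lemma ler_l1normB p q : l1norm (p - q) <= l1norm p + l1norm q.
Proof. by rewrite -(l1normN q) ler_l1normD. Qed.

Lemma l1normZ (c : R) p : l1norm (c *: p) = `|c| * l1norm p.
Proof.
rewrite (@l1norm_widen (c *: p) (size p)) ?size_scale_leq //.
by rewrite /l1norm mulr_sumr; apply: eq_bigr => i _; rewrite coefZ normrM.
Qed.

Lemma l1normC (c : R) : l1norm c%:P = `|c|.
Proof. by rewrite (@l1norm_widen _ 1) ?size_polyC ?leq_b1 // big_ord1 coefC. Qed.

Lemma l1norm_natr k : l1norm (k%:R : {poly R}) = k%:R.
Proof. by rewrite -polyC_natr l1normC normr_nat. Qed.

Lemma l1normMn p k : l1norm (p *+ k) = l1norm p *+ k.
Proof. by rewrite -scaler_nat l1normZ normr_nat mulr_natl. Qed.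

Lemma l1normXn k : l1norm ('X^k : {poly R}) = 1.
Proof.
rewrite /l1norm size_polyXn big_ord_recr /= coefXn eqxx normr1 big1 ?add0r // => i _.
by rewrite coefXn (ltn_eqF (ltn_ord i)) normr0.
Qed.

Lemma l1normMXaddC p c : l1norm (p * 'X + c%:P) = l1norm p + `|c|.
Proof.
rewrite (@l1norm_widen _ (size p).+1); last first.
  rewrite (leq_trans (size_polyD _ _)) // geq_max; apply/andP; split.
    by rewrite (leq_trans (size_polyMleq _ _)) // size_polyX addn2.
  by rewrite size_polyC (leq_trans (leq_b1 _)).
rewrite big_ord_recl !coefD coefMX coefC /= add0r addrC /l1norm.
by congr (_ + _); apply: eq_bigr => i _; rewrite coefD coefMX coefC /= addr0.
Qed.

Lemma l1normMX p : l1norm (p * 'X) = l1norm p.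
Proof.
rewrite (@l1norm_widen _ (size p).+1); last first.
  by rewrite (leq_trans (size_polyMleq _ _)) // size_polyX addn2.
rewrite big_ord_recl coefMX /= normr0 add0r /l1norm.
by apply: eq_bigr => i _; rewrite coefMX.
Qed.

Lemma ler_l1normM p q : l1norm (p * q) <= l1norm p * l1norm q.
Proof.
elim/poly_ind: p => [|p c ih]; first by rewrite mul0r l1norm0 mul0r.
rewrite l1normMXaddC mulrDl mulrDl -mulrA (mulrC 'X) mulrA mul_polyC.
by apply: le_trans (ler_l1normD _ _) _; rewrite l1normMX l1normZ lerD2r.
Qed.

Lemma ler_l1norm_sum (I : Type) (r : seq I) (P : pred I) (F : I -> {poly R}) :
  l1norm (\sum_(i <- r | P i) F i) <= \sum_(i <- r | P i) l1norm (F i).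
Proof.
apply: (big_ind2 (fun p x => l1norm p <= x)); first by rewrite l1norm0.
by move=> p1 x1 p2 x2 h1 h2; apply: le_trans (ler_l1normD _ _) (lerD h1 h2).
by [].
Qed.

Lemma ler_l1norm_take m p : l1norm (take_poly m p) <= l1norm p.
Proof.
by apply: ler_l1norm_coef => i; rewrite coef_take_poly; case: ifP; rewrite ?normr0.
Qed.

Lemma ler_l1norm_drop m p : l1norm (drop_poly m p) <= l1norm p.
Proof.
have [hm|hm] := leqP m (size p); last by rewrite drop_poly_eq0 ?l1norm0 ?l1norm_ge0 // ltnW.
have -> : l1norm p = \sum_(i < m + (size p - m)) `|p`_i| by rewrite (l1norm_widen (m := m + (size p - m))) ?subnKC.
have -> : l1norm (drop_poly m p) = \sum_(i < size p - m) `|p`_(m + i)|.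
  by rewrite /l1norm size_drop_poly; apply: eq_bigr => i _; rewrite coef_drop_poly addnC.
by rewrite big_split_ord /= lerDr sumr_ge0.
Qed.

End L1Norm.

Section FormEval.
Variable R : fieldType.
Implicit Types p q : {poly R}.

Definition form_eval e p (x y : R) := \sum_(k < e.+1) p`_k * x ^+ k * y ^+ (e - k).

Lemma bform_eval_poly_rV e p x y : bform_eval R e (poly_rV p) x y = form_eval e p x y.
Proof. by apply: eq_bigr => k _; rewrite mxE. Qed.

Lemma form_eval_sum e (I : Type) (r : seq I) (P : pred I) (F : I -> {poly R}) x y :
  form_eval e (\sum_(i <- r | P i) F i) x y = \sum_(i <- r | P i) form_eval e (F i) x y.
Proof.
rewrite /form_eval exchange_big /=; apply: eq_bigr => k _.
by rewrite coef_sum !mulr_suml.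
Qed.

Lemma form_eval_horner e p x y : (size p <= e.+1)%N -> y != 0 ->
  form_eval e p x y = y ^+ e * p.[x / y].
Proof.
move=> hp y0; rewrite (horner_coef_wide _ hp) mulr_sumr; apply: eq_bigr => k _.
have hk : (k <= e)%N by rewrite -ltnS.
have yk : y ^+ k != 0 by rewrite expf_neq0.
have -> : y ^+ e = y ^+ (e - k) * y ^+ k by rewrite -exprD subnK.
by rewrite expr_div_n; field.
Qed.

Lemma form_eval_y0 e p x : form_eval e p x 0 = p`_e * x ^+ e.
Proof.
rewrite /form_eval big_ord_recr /= subnn expr0 mulr1 big1 ?add0r // => k _.
by rewrite expr0n subn_eq0 leqNgt ltn_ord mulr0.
Qed.

Lemma coefM_top e1 e2 p q : (size p <= e1.+1)%N -> (size q <= e2.+1)%N ->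
  (p * q)`_(e1 + e2) = p`_e1 * q`_e2.
Proof.
move=> hp hq; rewrite coefM.
have he : (e1 < (e1 + e2).+1)%N by rewrite ltnS leq_addr.
rewrite (bigD1 (Ordinal he)) //= addKn big1 ?addr0 // => j hj.
have [lt_j|lt_e1|eq_j] := ltngtP j e1.
- by rewrite (@nth_default _ _ q) ?mulr0 //; apply: leq_trans hq _; lia.
- by rewrite (@nth_default _ _ p) ?mul0r //; apply: leq_trans hp _.
- by move: hj; rewrite -val_eqE /= eq_j eqxx.
Qed.

Lemma form_evalM e1 e2 p q x y : (size p <= e1.+1)%N -> (size q <= e2.+1)%N ->
  form_eval (e1 + e2) (p * q) x y = form_eval e1 p x y * form_eval e2 q x y.
Proof.
move=> hp hq.
have [->|y0] := eqVneq y 0; first by rewrite !form_eval_y0 coefM_top // exprD; ring.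
have hpq : (size (p * q)%R <= (e1 + e2).+1)%N.
  by apply: leq_trans (size_polyMleq _ _) _; lia.
by rewrite !form_eval_horner // hornerM exprD; ring.
Qed.

Lemma form_evalX e m p x y : (size p <= e.+1)%N ->
  form_eval (e * m) (p ^+ m) x y = form_eval e p x y ^+ m.
Proof.
move=> hp; elim: m => [|m IHm].
  by rewrite /form_eval muln0 big_ord1 !expr0 coef1 !mulr1.
have hpm : (size (p ^+ m) <= (e * m).+1)%N.
  by apply: leq_trans (size_poly_exp_leq _ _) _; rewrite ltnS leq_mul2r; apply/orP; right; lia.
by rewrite mulnS exprS form_evalM // IHm exprS.
Qed.

End FormEval.

Lemma size_polyD_leq (R : nzRingType) m (p q : {poly R}) :
  (size p <= m)%N -> (size q <= m)%N -> (size (p + q)%R <= m)%N.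
Proof. by move=> hp hq; apply: leq_trans (size_polyD _ _) _; rewrite geq_max hp. Qed.

Lemma size_polyB_leq (R : nzRingType) m (p q : {poly R}) :
  (size p <= m)%N -> (size q <= m)%N -> (size (p - q)%R <= m)%N.
Proof. by move=> hp hq; apply: size_polyD_leq; rewrite ?size_polyN. Qed.

Lemma drop_poly_drop (R : nzRingType) m k (p : {poly R}) :
  drop_poly m (drop_poly k p) = drop_poly (m + k) p.
Proof. by apply/polyP => i; rewrite !coef_drop_poly addnA. Qed.

Section Remainder.
Variable R : realFieldType.
Implicit Types P H : {poly R}.

Definition rem4 P H := (P + H) ^+ 4 - P ^+ 4 - 4%:R * P ^+ 3 * H.

Lemma rem4_0 P : rem4 P 0 = 0.
Proof. by rewrite /rem4; ring. Qed.

(* 76 = 6 * 2^2 * 2 + 4 * 2 * 3 + 2 * 2 bounds the cofactor of H - H'. *)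
Lemma ler_l1norm_rem4B P H H' (r : R) : l1norm P <= 2 -> l1norm H <= r -> l1norm H' <= r ->
  r <= 1 -> l1norm (rem4 P H - rem4 P H') <= 76 * r * l1norm (H - H').
Proof.
move=> hP hH hH' r1.
have r0 : 0 <= r by apply: le_trans (l1norm_ge0 _) hH.
have l1M (p q : {poly R}) (a b : R) : l1norm p <= a -> l1norm q <= b -> l1norm (p * q) <= a * b.
  by move=> ha hb; apply: le_trans (ler_l1normM _ _) (ler_pM (l1norm_ge0 _) (l1norm_ge0 _) ha hb).
have l1D (p q : {poly R}) (a b : R) : l1norm p <= a -> l1norm q <= b -> l1norm (p + q) <= a + b.
  by move=> ha hb; apply: le_trans (ler_l1normD _ _) (lerD ha hb).
have l1n k : l1norm (k%:R : {poly R}) <= k%:R by rewrite l1norm_natr.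
pose S := 6%:R * (P * P) * (H + H') + 4%:R * P * (H * H + H * H' + H' * H')
          + (H + H') * (H * H + H' * H').
have -> : rem4 P H - rem4 P H' = (H - H') * S by rewrite /rem4 /S; ring.
have hS : l1norm S <= 6 * (2 * 2) * (r + r) + 4 * 2 * (r * r + r * r + r * r)
                      + (r + r) * (r * r + r * r).
  by rewrite /S; repeat (apply: (l1n) || apply: (l1M) || apply: (l1D)).
rewrite mulrC; apply: l1M => //; apply: le_trans hS _.
have rr : r * r <= r by nra.
have rrr : r * r * r <= r by nra.
nra.
Qed.

End Remainder.

Lemma contraction_perturbation_onto (R : realType) (V : completeNormedModType R)
    (G : V -> V) (q rho : R) :
  0 <= q -> q < 1 -> 0 <= rho -> G 0 = 0 ->
  (forall u v, `|u| <= rho -> `|v| <= rho -> `|G u - G v| <= q * `|u - v|) ->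
  forall w, `|w| <= (1 - q) * rho -> exists2 v, `|v| <= rho & v + G v = w.
Proof.
move=> q0 q1 rho0 G0 Glip w hw.
pose U := [set v : V | `|v| <= rho].
have TU v : U v -> U (w - G v).
  move=> Uv; rewrite /U /=; apply: le_trans (ler_normB _ _) _.
  have := Glip v 0 Uv; rewrite normr0 G0 !subr0 => /(_ rho0) hG.
  have : q * `|v| <= q * rho by apply: ler_wpM2l.
  lra.
have cU : closed U.
  rewrite (_ : U = closed_ball_ Num.norm 0 rho); first exact: closed_closed_ball_.
  by apply/seteqP; split => v /=; rewrite /closed_ball_ /= sub0r normrN.
have contrT : is_contraction (mkfun_fun TU).
  exists (NngNum q0); split => //= -[u v] [/= Uu Uv].
  by rewrite opprB addrC addrA subrK distrC; apply: Glip.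
have U0 : U !=set0 by exists 0; rewrite /U /= normr0.
have [v Uv Ev] := banach_fixed_point contrT cU U0.
by exists v => //; rewrite {1}Ev /= subrK.
Qed.

(* Exposes the completeness of matrices on their normed-module structure,
   so that 'rV[R]_n is a completeNormedModType. *)
HB.instance Definition _ (R : realType) (m n : nat) := Complete.on 'M[R]_(m, n).

Section RowPoly.
Variables (R : realType) (n : nat).

Lemma ler_entry_norm (v : 'rV[R]_n) i : `|v 0 i| <= `|v|.
Proof.
rewrite [leRHS]/Num.norm /= mx_normrE.
exact: (le_bigmax _ (fun ij : 'I_1 * 'I_n => `|v ij.1 ij.2|) (0, i)).
Qed.

Lemma ler_norm_poly_rV (p : {poly R}) : `|poly_rV p : 'rV[R]_n| <= l1norm p.
Proof.
rewrite [leLHS]/Num.norm /= mx_normrE; apply/bigmax_leP; split => [|[i j] _ /=].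
  exact: l1norm_ge0.
by rewrite mxE ler_coef_l1norm.
Qed.

Lemma ler_l1norm_rVpoly (v : 'rV[R]_n) : l1norm (rVpoly v) <= n%:R * `|v|.
Proof.
rewrite (@l1norm_widen _ _ n) ?size_poly //.
have -> : n%:R * `|v| = \sum_(i < n) `|v| by rewrite sumr_const card_ord mulr_natl.
by apply: ler_sum => i _; rewrite coef_rVpoly_ord ler_entry_norm.
Qed.

End RowPoly.

Section FourthPowers.
Variables (R : realType) (d : nat).
Local Notation n := (4 * d).+1.
Local Notation Y := ('X^d : {poly R}).
Implicit Types f g : {poly R}.

Definition block m f := take_poly d (drop_poly (m * d) f).
Definition top_block f := drop_poly (3 * d) f.

Lemma poly_blocks f :
  f = block 0 f + Y * block 1 f + Y ^+ 2 * block 2 f + Y ^+ 3 * top_block f.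
Proof.
have split m : drop_poly (m * d) f = block m f + Y * drop_poly (m.+1 * d) f.
  by rewrite -{1}(poly_take_drop d (drop_poly (m * d) f)) drop_poly_drop -mulSn mulrC.
have := split 0%N; have := split 1%N; have := split 2%N.
rewrite mul0n drop_poly0l /top_block => e2 e1 e0.
by rewrite {1}e0 e1 e2; ring.
Qed.

Definition corr_h f := 24^-1 *: block 2 f.
Definition corr_k f := 24^-1 *: block 1 f.

Definition base : seq {poly R} := [:: 1; Y; 1 + Y; 1 - Y].
Definition corr f : seq {poly R} :=
  [:: 4^-1 *: block 0 f - corr_h f *+ 2; 4^-1 *: top_block f - corr_k f *+ 2;
      corr_h f + corr_k f; corr_h f - corr_k f].

Lemma natr_mul_scaleV k (p : {poly R}) : (0 < k)%N -> k%:R * (k%:R^-1 *: p) = p.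
Proof. by move=> k0; rewrite mulr_natl -scaler_nat scalerA mulfV ?scale1r // pnatr_eq0 -lt0n. Qed.

Lemma sum_base_corr f : \sum_(i < 4) 4%:R * base`_i ^+ 3 * (corr f)`_i = f.
Proof.
rewrite !big_ord_recr big_ord0 /= [RHS]poly_blocks /corr /corr_h /corr_k.
move: (4^-1 *: block 0 f) (natr_mul_scaleV (block 0 f) (isT : 0 < 4)%N) => a <-.
move: (4^-1 *: top_block f) (natr_mul_scaleV (top_block f) (isT : 0 < 4)%N) => b <-.
move: (24^-1 *: block 2 f) (natr_mul_scaleV (block 2 f) (isT : 0 < 24)%N) => h <-.
move: (24^-1 *: block 1 f) (natr_mul_scaleV (block 1 f) (isT : 0 < 24)%N) => k <-.
ring.
Qed.

Lemma ler_l1norm_corr f i : l1norm (corr f)`_i <= l1norm f.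
Proof.
have hb m : l1norm (block m f) <= l1norm f.
  exact: le_trans (ler_l1norm_take _ _) (ler_l1norm_drop _ _).
have ht : l1norm (top_block f) <= l1norm f by apply: ler_l1norm_drop.
have h0 := l1norm_ge0 f.
have hh : l1norm (corr_h f) <= l1norm f / 24.
  by rewrite l1normZ ger0_norm // mulrC ler_pM2r ?hb.
have hk : l1norm (corr_k f) <= l1norm f / 24.
  by rewrite l1normZ ger0_norm // mulrC ler_pM2r ?hb.
case: i => [|[|[|[|i]]]] /=.
- apply: le_trans (ler_l1normB _ _) _; rewrite l1normMn l1normZ ger0_norm //.
  have := hb 0%N; lra.
- apply: le_trans (ler_l1normB _ _) _; rewrite l1normMn l1normZ ger0_norm //.
  lra.
- by apply: le_trans (ler_l1normD _ _) _; lra.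
- by apply: le_trans (ler_l1normB _ _) _; lra.
- by rewrite nth_nil l1norm0.
Qed.

Lemma corrB f g i : (corr (f - g))`_i = (corr f)`_i - (corr g)`_i.
Proof.
case: i => [|[|[|[|i]]]] /=; last by rewrite nth_nil subr0.
all: by rewrite /corr_h /corr_k /block /top_block !raddfB /= ?scalerBr; ring.
Qed.

Lemma size_base_corr f i : (size f <= n)%N -> (size (base`_i + (corr f)`_i)%R <= d.+1)%N.
Proof.
move=> hf.
have s1 : (size (1%R : {poly R}) <= d.+1)%N by rewrite size_poly1.
have sY : (size Y <= d.+1)%N by rewrite size_polyXn.
have sB m (c : R) : (size (c *: block m f)%R <= d.+1)%N.
  exact: leq_trans (size_scale_leq _ _) (leq_trans (size_take_poly _ _) (leqnSn _)).
have sT (c : R) : (size (c *: top_block f)%R <= d.+1)%N.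
  by apply: leq_trans (size_scale_leq _ _) _; rewrite size_drop_poly; lia.
case: i => [|[|[|[|i]]]] /=; last by rewrite nth_nil addr0 size_poly0.
all: rewrite /corr_h /corr_k ?mulr2n.
all: by repeat (apply: (sB) || apply: (sT) || apply: size_polyB_leq || apply: size_polyD_leq).
Qed.

Definition rem f := \sum_(i < 4) rem4 base`_i (corr f)`_i.
Definition base_sum : {poly R} := \sum_(i < 4) base`_i ^+ 4.

Lemma sum_base_corr_pow4 f :
  \sum_(i < 4) (base`_i + (corr f)`_i) ^+ 4 = base_sum + f + rem f.
Proof.
rewrite -{2}(sum_base_corr f) /base_sum /rem -!big_split /=.
by apply: eq_bigr => i _; rewrite /rem4; ring.
Qed.

Lemma rem0 : rem 0 = 0.
Proof.
rewrite /rem big1 // => i _.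
have -> : (corr 0)`_i = 0 by rewrite -[X in corr X](subrr 0) corrB subrr.
exact: rem4_0.
Qed.

Lemma l1norm_base i : l1norm base`_i <= 2.
Proof.
have h1 : l1norm (1 : {poly R}) = 1 by rewrite -polyC1 l1normC normr1.
case: i => [|[|[|[|i]]]] /=.
- by rewrite h1 ler1n.
- by rewrite l1normXn ler1n.
- by apply: le_trans (ler_l1normD _ _) _; rewrite h1 l1normXn.
- by apply: le_trans (ler_l1normB _ _) _; rewrite h1 l1normXn.
- by rewrite nth_nil l1norm0.
Qed.

Lemma ler_l1norm_remB f g r : l1norm f <= r -> l1norm g <= r -> r <= 1 ->
  l1norm (rem f - rem g) <= 304 * r * l1norm (f - g).
Proof.
move=> hf hg r1.
have r0 : 0 <= r by apply: le_trans (l1norm_ge0 _) hf.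
rewrite /rem -sumrB; apply: le_trans (ler_l1norm_sum _ _ _) _.
have -> : 304 * r * l1norm (f - g) = \sum_(i < 4) 76 * r * l1norm (f - g).
  by rewrite sumr_const card_ord; ring.
apply: ler_sum => i _.
have hfi := le_trans (ler_l1norm_corr f i) hf.
have hgi := le_trans (ler_l1norm_corr g i) hg.
apply: le_trans (ler_l1norm_rem4B (l1norm_base i) hfi hgi r1) _.
by rewrite -corrB ler_wpM2l ?mulr_ge0 ?ler_l1norm_corr.
Qed.

Lemma len4_le4_poly_rV f : (size f <= n)%N ->
  len4_le4 R d (poly_rV (base_sum + f + rem f)).
Proof.
move=> hf; exists (fun i : 'I_4 => poly_rV (base`_i + (corr f)`_i)) => x y.
rewrite -sum_base_corr_pow4 bform_eval_poly_rV form_eval_sum.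
apply: eq_bigr => i _; rewrite bform_eval_poly_rV mulnC.
exact: form_evalX (size_base_corr _ hf).
Qed.

Definition rem_row (v : 'rV[R]_n) : 'rV[R]_n := poly_rV (rem (rVpoly v)).

Lemma ler_norm_rem_rowB (rho : R) (u v : 'rV[R]_n) : n%:R * rho <= 1 ->
  `|u| <= rho -> `|v| <= rho -> `|rem_row u - rem_row v| <= 304 * n%:R ^+ 2 * rho * `|u - v|.
Proof.
move=> hr hu hv.
have hl (w : 'rV[R]_n) : `|w| <= rho -> l1norm (rVpoly w) <= n%:R * rho.
  by move=> hw; apply: le_trans (ler_l1norm_rVpoly w) (ler_wpM2l (ler0n _ _) hw).
have -> : rem_row u - rem_row v = poly_rV (rem (rVpoly u) - rem (rVpoly v)) by rewrite raddfB.
apply: le_trans (ler_norm_poly_rV _ _) _.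
apply: le_trans (ler_l1norm_remB (hl u hu) (hl v hv) hr) _.
have := ler_l1norm_rVpoly (u - v); rewrite raddfB => huv.
have h0 : 0 <= 304 * (n%:R * rho).
  by rewrite mulr_ge0 ?ler0n; last by apply: le_trans (l1norm_ge0 _) (hl u hu).
rewrite (_ : 304 * n%:R ^+ 2 * rho * `|u - v| = 304 * (n%:R * rho) * (n%:R * `|u - v|)).
  exact: ler_wpM2l.
by ring.
Qed.

Lemma len4_le4_nbhs : nbhs (poly_rV base_sum : 'rV[R]_n) (len4_le4 R d).
Proof.
set N : R := n%:R.
have N1 : 1 <= N by rewrite ler1n.
have N0 : N != 0 by rewrite lt0r_neq0 // (lt_le_trans ltr01 N1).
pose rho := (608 * N ^+ 2)^-1.
have rho0 : 0 < rho by rewrite invr_gt0 mulr_gt0 ?ltr0n ?exprn_gt0 ?(lt_le_trans ltr01 N1).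
have half : 304 * N ^+ 2 * rho = 1 / 2 by rewrite /rho; field.
have hNrho : N * rho <= 1.
  apply: le_trans (_ : _ <= 304 * N ^+ 2 * rho) _; last by rewrite half; lra.
  rewrite ler_wpM2r ?(ltW rho0) // expr2 mulrA ler_peMl ?(le_trans ler01 N1) //.
  by apply: le_trans N1 _; rewrite ler_peMl ?(le_trans ler01 N1) ?ler1n.
apply/nbhs_ballP; exists (rho / 2); first by rewrite /= divr_gt0.
move=> t; rewrite -ball_normE /= => ht.
have hw : `|t - poly_rV base_sum| <= (1 - 1 / 2) * rho.
  rewrite distrC (_ : (1 - 1 / 2) * rho = rho / 2); first exact: ltW.
  by field.
have lip u v : `|u| <= rho -> `|v| <= rho -> `|rem_row u - rem_row v| <= 1 / 2 * `|u - v|.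
  by move=> hu hv; rewrite -half; apply: ler_norm_rem_rowB.
have rem_row0 : rem_row 0 = 0 by rewrite /rem_row raddf0 rem0 raddf0.
have q0 : 0 <= 1 / 2 :> R by rewrite divr_ge0 ?ler0n.
have q1 : 1 / 2 < 1 :> R by rewrite ltr_pdivrMr ?ltr0n // mul1r ltr1n.
have [v _ Ev] := contraction_perturbation_onto q0 q1 (ltW rho0) rem_row0 lip hw.
have -> : t = poly_rV (base_sum + rVpoly v + rem (rVpoly v)).
  by rewrite !raddfD /= rVpolyK -addrA Ev addrC subrK.
exact/len4_le4_poly_rV/size_poly.
Qed.

End FourthPowers.

Theorem mainTheorem8 (R : realType) (d : nat) :
  (1 <= d)%N -> (len4_le4 R d)° !=set0.
Proof.
(* The construction works for d = 0 as well. *)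
by move=> _; exists (poly_rV (base_sum R d)); apply: len4_le4_nbhs.
Qed.
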